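(* Let $A$ be a commutative semiring (not necessarily idempotent). Every finitely presented flat $A$-module is projective.
   Context: Modules over $A$ are commutative monoids with compatible $A$-action; $\otimes_A$ is the tensor product. $M$ is flat if $-\otimes_A M$ is exact (preserves finite limits and finite colimits). $M$ is finitely presented if it is a coequaliser of two homomorphisms between finite free modules $A^k\rightrightarrows A^n$. $M$ is projective if every surjection onto $M$ has a section (equivalently $M$ is a retract of a free module). *)

(* Modules over a commutative semiring A are MathComp
   left semimodules (lSemiModType A); homomorphisms are functions satisfying
   [is_hom]; the tensor product and the categorical (co)limits in the
   category of A-modules are given by their universal properties. *)
From HB Require Import structures.
From mathcomp Require Import all_boot all_order all_algebra.
Set Implicit Arguments. Unset Strict Implicit. Unset Printing Implicit Defensive.
Import GRing.Theory.
Local Open Scope ring_scope.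

Section ModCat.
Variable A : comPzSemiRingType.

Definition is_hom (U V : lSemiModType A) (f : U -> V) : Prop :=
  [/\ f 0 = 0, (forall x y, f (x + y) = f x + f y)
    & (forall (a : A) x, f (a *: x) = a *: f x)].

Definition is_terminal (T : lSemiModType A) : Prop :=
  forall Z : lSemiModType A,
    exists u : Z -> T, is_hom u /\ forall v : Z -> T, is_hom v -> v =1 u.

Definition is_product (P X Y : lSemiModType A) (p1 : P -> X) (p2 : P -> Y) : Prop :=
  is_hom p1 /\ is_hom p2 /\
  forall (Z : lSemiModType A) (z1 : Z -> X) (z2 : Z -> Y), is_hom z1 -> is_hom z2 ->
    exists u : Z -> P, [/\ is_hom u, p1 \o u =1 z1, p2 \o u =1 z2 &
      forall v : Z -> P, is_hom v -> p1 \o v =1 z1 -> p2 \o v =1 z2 -> v =1 u].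

Definition is_equalizer (E X Y : lSemiModType A) (f g : X -> Y) (e : E -> X) : Prop :=
  is_hom e /\ f \o e =1 g \o e /\
  forall (Z : lSemiModType A) (z : Z -> X), is_hom z -> f \o z =1 g \o z ->
    exists u : Z -> E, [/\ is_hom u, e \o u =1 z &
      forall v : Z -> E, is_hom v -> e \o v =1 z -> v =1 u].

Definition is_initial (I : lSemiModType A) : Prop :=
  forall Z : lSemiModType A,
    exists u : I -> Z, is_hom u /\ forall v : I -> Z, is_hom v -> v =1 u.

Definition is_coproduct (C X Y : lSemiModType A) (i1 : X -> C) (i2 : Y -> C) : Prop :=
  is_hom i1 /\ is_hom i2 /\
  forall (Z : lSemiModType A) (z1 : X -> Z) (z2 : Y -> Z), is_hom z1 -> is_hom z2 ->
    exists u : C -> Z, [/\ is_hom u, u \o i1 =1 z1, u \o i2 =1 z2 &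
      forall v : C -> Z, is_hom v -> v \o i1 =1 z1 -> v \o i2 =1 z2 -> v =1 u].

Definition is_coequalizer (Q X Y : lSemiModType A) (f g : X -> Y) (q : Y -> Q) : Prop :=
  is_hom q /\ q \o f =1 q \o g /\
  forall (Z : lSemiModType A) (z : Y -> Z), is_hom z -> z \o f =1 z \o g ->
    exists u : Q -> Z, [/\ is_hom u, u \o q =1 z &
      forall v : Q -> Z, is_hom v -> v \o q =1 z -> v =1 u].

Definition is_bilinear (N M P : lSemiModType A) (b : N -> M -> P) : Prop :=
  (forall m, is_hom (fun n => b n m)) /\ (forall n, is_hom (b n)).

Definition is_tensor (N M T : lSemiModType A) (b : N -> M -> T) : Prop :=
  is_bilinear b /\
  forall (P : lSemiModType A) (phi : N -> M -> P), is_bilinear phi ->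
    exists h : T -> P, [/\ is_hom h, (forall n m, h (b n m) = phi n m) &
      forall h' : T -> P, is_hom h' -> (forall n m, h' (b n m) = phi n m) -> h' =1 h].

Definition tensor_map (N1 N2 M T1 T2 : lSemiModType A)
  (b1 : N1 -> M -> T1) (b2 : N2 -> M -> T2) (f : N1 -> N2) (h : T1 -> T2) : Prop :=
  is_hom h /\ forall n m, h (b1 n m) = b2 (f n) m.

Definition tensor_preserves_finite_limits (M : lSemiModType A) : Prop :=
  [/\ (forall (T TT : lSemiModType A) (b : T -> M -> TT),
         is_terminal T -> is_tensor b -> is_terminal TT),
      (forall (P X Y TP TX TY : lSemiModType A) (p1 : P -> X) (p2 : P -> Y)
         (bP : P -> M -> TP) (bX : X -> M -> TX) (bY : Y -> M -> TY)
         (q1 : TP -> TX) (q2 : TP -> TY),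
         is_product p1 p2 -> is_tensor bP -> is_tensor bX -> is_tensor bY ->
         tensor_map bP bX p1 q1 -> tensor_map bP bY p2 q2 -> is_product q1 q2) &
      (forall (E X Y TE TX TY : lSemiModType A) (f g : X -> Y) (e : E -> X)
         (bE : E -> M -> TE) (bX : X -> M -> TX) (bY : Y -> M -> TY)
         (fT gT : TX -> TY) (eT : TE -> TX),
         is_equalizer f g e -> is_tensor bE -> is_tensor bX -> is_tensor bY ->
         tensor_map bX bY f fT -> tensor_map bX bY g gT -> tensor_map bE bX e eT ->
         is_equalizer fT gT eT)].

Definition tensor_preserves_finite_colimits (M : lSemiModType A) : Prop :=
  [/\ (forall (I TI : lSemiModType A) (b : I -> M -> TI),
         is_initial I -> is_tensor b -> is_initial TI),
      (forall (C X Y TC TX TY : lSemiModType A) (i1 : X -> C) (i2 : Y -> C)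
         (bC : C -> M -> TC) (bX : X -> M -> TX) (bY : Y -> M -> TY)
         (j1 : TX -> TC) (j2 : TY -> TC),
         is_coproduct i1 i2 -> is_tensor bC -> is_tensor bX -> is_tensor bY ->
         tensor_map bX bC i1 j1 -> tensor_map bY bC i2 j2 -> is_coproduct j1 j2) &
      (forall (Q X Y TQ TX TY : lSemiModType A) (f g : X -> Y) (q : Y -> Q)
         (bQ : Q -> M -> TQ) (bX : X -> M -> TX) (bY : Y -> M -> TY)
         (fT gT : TX -> TY) (qT : TY -> TQ),
         is_coequalizer f g q -> is_tensor bQ -> is_tensor bX -> is_tensor bY ->
         tensor_map bX bY f fT -> tensor_map bX bY g gT -> tensor_map bY bQ q qT ->
         is_coequalizer fT gT qT)].

Definition flat (M : lSemiModType A) : Prop :=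
  tensor_preserves_finite_limits M /\ tensor_preserves_finite_colimits M.

Definition finitely_presented (M : lSemiModType A) : Prop :=
  exists (k n : nat) (f g : 'rV[A]_k -> 'rV[A]_n) (q : 'rV[A]_n -> M),
    [/\ is_hom f, is_hom g & is_coequalizer f g q].

Definition projective (M : lSemiModType A) : Prop :=
  forall (N : lSemiModType A) (p : N -> M), is_hom p -> (forall m : M, exists n : N, p n = m) ->
    exists s : M -> N, is_hom s /\ p \o s =1 id.

End ModCat.

(* Let M be the coequalizer q : A^n -> M of f, g : A^k -> A^n, and let E be the
   equalizer of the transposed maps f^T, g^T : A^n -> A^k.  By flatness E (x) M
   is the equalizer of f^T (x) M and g^T (x) M.  The element
   sum_i e_i (x) q(e_i) of A^n (x) M is equalized by them because q f = q g, so
   it equals sum_l c_l (x) x_l with every c_l in E.  Then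
   h := (<c_l, ->)_l : A^n -> A^m coequalizes f and g and q = (sum_l x_l .) o h,
   so h factors through M as s with (sum_l x_l .) o s = id: M is a retract of
   A^m, hence projective. *)

From HB Require Import structures.
From mathcomp Require Import all_boot all_order all_algebra.
From mathcomp Require Import boolp.
Set Implicit Arguments. Unset Strict Implicit. Unset Printing Implicit Defensive.
Import GRing.Theory.
Local Open Scope ring_scope.
Local Open Scope quotient_scope.

Section Homomorphisms.
Variable A : comPzSemiRingType.
Implicit Types U V W : lSemiModType A.

Lemma hom0 U V (h : U -> V) : is_hom h -> h 0 = 0.
Proof. by case. Qed.

Lemma homD U V (h : U -> V) x y : is_hom h -> h (x + y) = h x + h y.
Proof. by case. Qed.

Lemma homZ U V (h : U -> V) a x : is_hom h -> h (a *: x) = a *: h x.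
Proof. by case. Qed.

Lemma hom_sum U V (h : U -> V) I (r : seq I) (F : I -> U) :
  is_hom h -> h (\sum_(i <- r) F i) = \sum_(i <- r) h (F i).
Proof.
move=> hh; elim: r => [|i r IH]; first by rewrite !big_nil hom0.
by rewrite !big_cons homD // IH.
Qed.

Lemma hom_id U : is_hom (@id U).
Proof. by []. Qed.

Lemma hom_comp U V W (h1 : U -> V) (h2 : V -> W) :
  is_hom h1 -> is_hom h2 -> is_hom (h2 \o h1).
Proof.
move=> hh1 hh2; split=> [|x y|a x] /=; first by rewrite !hom0.
  by rewrite !homD.
by rewrite !homZ.
Qed.

Lemma hom_mulmx m n (B : 'M[A]_(m, n)) : is_hom (mulmx^~ B : 'rV_m -> 'rV_n).
Proof. by split=> [|x y|a x]; rewrite ?mul0mx ?mulmxDl ?scalemxAl. Qed.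

Definition lcomb n V (c : 'I_n -> V) (w : 'rV[A]_n) : V := \sum_i w 0 i *: c i.

Lemma hom_lcomb n V (c : 'I_n -> V) : is_hom (lcomb c).
Proof.
split=> [|x y|a x]; rewrite /lcomb.
- by rewrite big1 // => i _; rewrite mxE scale0r.
- by rewrite -big_split; apply: eq_bigr => i _; rewrite mxE scalerDl.
- by rewrite scaler_sumr; apply: eq_bigr => i _; rewrite mxE scalerA.
Qed.

Lemma lcomb_delta n V (c : 'I_n -> V) i : lcomb c 'e_i = c i.
Proof.
rewrite /lcomb (bigD1 i) //= mxE !eqxx scale1r big1 ?addr0 // => j /negPf nji.
by rewrite mxE nji andbF scale0r.
Qed.

Lemma hom_lcombE n V (h : 'rV[A]_n -> V) : is_hom h -> h =1 lcomb (h \o delta_mx 0).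
Proof.
move=> hh v; rewrite {1}(row_sum_delta v) hom_sum //.
by apply: eq_bigr => i _; rewrite homZ.
Qed.

Lemma hom_rV_ext n V (h h' : 'rV[A]_n -> V) :
  is_hom h -> is_hom h' -> (forall i, h 'e_i = h' 'e_i) -> h =1 h'.
Proof.
move=> hh hh' e v; rewrite (hom_lcombE hh) (hom_lcombE hh').
by apply: eq_bigr => i _ /=; rewrite e.
Qed.

Definition hom_mx m n (h : 'rV[A]_m -> 'rV[A]_n) : 'M_(m, n) := \matrix_i h 'e_i.

Lemma hom_mxE m n (h : 'rV[A]_m -> 'rV[A]_n) :
  is_hom h -> h =1 mulmx^~ (hom_mx h).
Proof.
move=> hh; apply: hom_rV_ext => // [|i]; first exact: hom_mulmx.
by rewrite -rowE rowK.
Qed.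

End Homomorphisms.

Lemma rV_retract_projective (A : comPzSemiRingType) (M : lSemiModType A) n
    (s : M -> 'rV[A]_n) (r : 'rV[A]_n -> M) :
  is_hom s -> is_hom r -> r \o s =1 id -> projective M.
Proof.
move=> hs hr rsK N p hp p_onto.
have [y yP] := choice (fun i => p_onto (r 'e_i)).
exists (lcomb y \o s); split; first exact/hom_comp/hom_lcomb.
move=> x /=; rewrite -[RHS]rsK /= (hom_lcombE hr) hom_sum //.
by apply: eq_bigr => i _; rewrite homZ // yP.
Qed.

Section Equalizer.
Variables (A : comPzSemiRingType) (U V : lSemiModType A) (phi psi : U -> V).
Hypotheses (phi_hom : is_hom phi) (psi_hom : is_hom psi).

Definition equalizer_pred (u : U) := phi u == psi u.

Fact equalizer_subsemimod_closed : subsemimod_closed equalizer_pred.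
Proof.
split; first split=> [|u v]; rewrite ?unfold_in /equalizer_pred.
- by rewrite !hom0.
- by move=> eu ev; rewrite !homD // (eqP eu) (eqP ev).
by move=> a u; rewrite !unfold_in => eu; rewrite !homZ // (eqP eu).
Qed.

HB.instance Definition _ :=
  GRing.isSubSemiModClosed.Build A U equalizer_pred equalizer_subsemimod_closed.

Record equalizer_sub := EqualizerSub {
  equalizer_val : U;
  _ : equalizer_pred equalizer_val
}.

HB.instance Definition _ := [isSub for equalizer_val].
HB.instance Definition _ := [Choice of equalizer_sub by <:].
HB.instance Definition _ := [SubChoice_isSubLSemiModule of equalizer_sub by <:].

Lemma equalizer_subP : is_equalizer phi psi equalizer_val.
Proof.
split; first by split=> [|u v|a u]; rewrite ?raddf0 ?raddfD ?linearZ.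
split; first by case=> u uP; apply/eqP.
move=> Z z hz phiz; have zP x : equalizer_pred (z x) by apply/eqP/phiz.
exists (fun x => EqualizerSub (zP x)); split=> //.
- by split=> [|x y|a x]; apply: val_inj; rewrite /= ?hom0 ?homD ?homZ ?raddfD ?linearZ.
- by move=> v hv vz x; apply: val_inj; rewrite /= -vz.
Qed.

End Equalizer.

Section UniversalProperties.
Variable A : comPzSemiRingType.
Implicit Types U V E Q Z : lSemiModType A.

Lemma equalizer_lift E U V (phi psi : U -> V) (e : E -> U) x :
  is_hom phi -> is_hom psi -> is_equalizer phi psi e -> phi x = psi x ->
  exists y, e y = x.
Proof.
move=> hphi hpsi [_ [_ e_univ]] ex.
(* x is the image of 1 under the hom A -> U, w |-> w 0 0 *: x. *)
pose z (w : 'rV[A]_1) := w 0 0 *: x.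
have hz : is_hom z.
  by split=> [|v w|a w]; rewrite /z mxE ?scale0r ?scalerDl ?scalerA.
have phiz : phi \o z =1 psi \o z by move=> w; rewrite /= !homZ // ex.
have [u [_ eu _]] := e_univ _ z hz phiz.
by exists (u 1); rewrite -[e _]/((e \o u) 1) eu /z mxE scale1r.
Qed.

Lemma coequalizer_epi Q U V Z (f g : U -> V) (q : V -> Q) (u v : Q -> Z) :
  is_coequalizer f g q -> is_hom u -> is_hom v -> u \o q =1 v \o q -> u =1 v.
Proof.
move=> [hq [qfg q_univ]] hu hv uv.
have uqfg : (u \o q) \o f =1 (u \o q) \o g by move=> x; congr u; apply: qfg.
have [w [_ _ w_uniq]] := q_univ _ _ (hom_comp hq hu) uqfg.
by move=> x; rewrite (w_uniq u) // (w_uniq v).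
Qed.

End UniversalProperties.

Section TensorProduct.
Variables (A : comPzSemiRingType) (N M : lSemiModType A).

Definition scale_word (a : A) (s : seq (N * M)) := [seq (a *: p.1, p.2) | p <- s].

Inductive tensor_eqv : seq (N * M) -> seq (N * M) -> Prop :=
| Teqv_refl s : tensor_eqv s s
| Teqv_sym s t : tensor_eqv s t -> tensor_eqv t s
| Teqv_trans s t u : tensor_eqv s t -> tensor_eqv t u -> tensor_eqv s u
| Teqv_cat s s' t t' :
    tensor_eqv s s' -> tensor_eqv t t' -> tensor_eqv (s ++ t) (s' ++ t')
| Teqv_scale a s t : tensor_eqv s t -> tensor_eqv (scale_word a s) (scale_word a t)
| Teqv_catC s t : tensor_eqv (s ++ t) (t ++ s)
| Teqv_addl n n' m : tensor_eqv [:: (n + n', m)] [:: (n, m); (n', m)]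
| Teqv_addr n m m' : tensor_eqv [:: (n, m + m')] [:: (n, m); (n, m')]
| Teqv_0l m : tensor_eqv [:: (0, m)] [::]
| Teqv_0r n : tensor_eqv [:: (n, 0)] [::]
| Teqv_scale_swap a n m : tensor_eqv [:: (a *: n, m)] [:: (n, a *: m)].

Definition tensor_rel : rel (seq (N * M)) := fun s t => `[< tensor_eqv s t >].

Lemma tensor_relP s t : reflect (tensor_eqv s t) (tensor_rel s t).
Proof. exact: asboolP. Qed.

Lemma tensor_rel_refl : reflexive tensor_rel.
Proof. by move=> s; apply/tensor_relP/Teqv_refl. Qed.

Lemma tensor_rel_sym : symmetric tensor_rel.
Proof. by move=> s t; apply/tensor_relP/tensor_relP => /Teqv_sym. Qed.

Lemma tensor_rel_trans : transitive tensor_rel.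
Proof.
by move=> t s u /tensor_relP st /tensor_relP tu; apply/tensor_relP/(Teqv_trans st).
Qed.

Canonical tensor_equiv_rel :=
  EquivRel tensor_rel tensor_rel_refl tensor_rel_sym tensor_rel_trans.

Definition tensor := {eq_quot tensor_rel}.
HB.instance Definition _ := EqQuotient.on tensor.
HB.instance Definition _ := Choice.on tensor.

Lemma tensor_eqP s t : \pi_tensor s = \pi_tensor t <-> tensor_eqv s t.
Proof. by split => [/eqmodP/tensor_relP | /tensor_relP/eqmodP]. Qed.

(* Locked, so that rewriting with [tensor_addE] cannot unfold nested sums. *)
Definition tensor_add (x y : tensor) : tensor :=
  locked (\pi_tensor (repr x ++ repr y)).
Definition tensor_scale (a : A) (x : tensor) : tensor :=
  locked (\pi_tensor (scale_word a (repr x))).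

Lemma tensor_addE s t : tensor_add (\pi_tensor s) (\pi_tensor t) = \pi_tensor (s ++ t).
Proof.
by rewrite /tensor_add -lock; apply/tensor_eqP/Teqv_cat; apply/tensor_eqP; rewrite reprK.
Qed.

Lemma tensor_scaleE a s : tensor_scale a (\pi_tensor s) = \pi_tensor (scale_word a s).
Proof.
by rewrite /tensor_scale -lock; apply/tensor_eqP/Teqv_scale/tensor_eqP; rewrite reprK.
Qed.

Lemma tensor_addA : associative tensor_add.
Proof. by elim/quotW=> s; elim/quotW=> t; elim/quotW=> u; rewrite !tensor_addE catA. Qed.

Lemma tensor_addC : commutative tensor_add.
Proof.
by elim/quotW=> s; elim/quotW=> t; rewrite !tensor_addE; apply/tensor_eqP/Teqv_catC.
Qed.

Lemma tensor_add0 : left_id (\pi_tensor [::]) tensor_add.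
Proof. by elim/quotW=> s; rewrite tensor_addE. Qed.

HB.instance Definition _ :=
  GRing.isNmodule.Build tensor tensor_addA tensor_addC tensor_add0.

Lemma pi_tensor_cat s t : \pi_tensor (s ++ t) = \pi_tensor s + \pi_tensor t.
Proof. exact: (esym (tensor_addE s t)). Qed.

Definition tmul (n : N) (m : M) : tensor := \pi_tensor [:: (n, m)].

Lemma pi_tensor_cons p s : \pi_tensor (p :: s) = tmul p.1 p.2 + \pi_tensor s.
Proof. by case: p => n m; apply: (pi_tensor_cat [:: (n, m)]). Qed.

Lemma pi_tensor_nil : \pi_tensor [::] = 0.
Proof. by []. Qed.

Lemma tensor_scaleA a b x : tensor_scale a (tensor_scale b x) = tensor_scale (a * b) x.
Proof.
elim/quotW: x => s; rewrite !tensor_scaleE /scale_word -map_comp.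
by congr \pi_tensor; apply: eq_map => p /=; rewrite scalerA.
Qed.

Lemma tensor_scale0 x : tensor_scale 0 x = 0.
Proof.
elim/quotW: x => s; rewrite tensor_scaleE; elim: s => [|p s IH] //=.
by rewrite pi_tensor_cons IH addr0 scale0r; apply/tensor_eqP/Teqv_0l.
Qed.

Lemma tensor_scale1 : left_id 1 tensor_scale.
Proof.
elim/quotW=> s; rewrite tensor_scaleE; congr \pi_tensor.
by elim: s => [|[n m] s IH] //=; rewrite scale1r IH.
Qed.

Lemma tensor_scaleDr : right_distributive tensor_scale tensor_add.
Proof.
move=> a; elim/quotW=> s; elim/quotW=> t.
by rewrite tensor_addE !tensor_scaleE tensor_addE /scale_word map_cat.
Qed.

Lemma tensor_scaleDl x : {morph tensor_scale^~ x : a b / a + b >-> tensor_add a b}.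
Proof.
move=> a b; elim/quotW: x => s; rewrite !tensor_scaleE tensor_addE.
elim: s => [|p s IH] //=; rewrite !pi_tensor_cons IH !pi_tensor_cat pi_tensor_cons /=.
suff -> : tmul ((a + b) *: p.1) p.2 = tmul (a *: p.1) p.2 + tmul (b *: p.1) p.2.
  by rewrite addrACA !addrA.
by rewrite -(pi_tensor_cat [:: _]) scalerDl; apply/tensor_eqP/Teqv_addl.
Qed.

HB.instance Definition _ := GRing.Nmodule_isLSemiModule.Build A tensor
  tensor_scaleA tensor_scale0 tensor_scale1 tensor_scaleDr tensor_scaleDl.

Lemma tensor_scale_pi a s : a *: \pi_tensor s = \pi_tensor (scale_word a s).
Proof. exact: tensor_scaleE. Qed.

Lemma pi_tensor_sum s : \pi_tensor s = \sum_(p <- s) tmul p.1 p.2.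
Proof.
elim: s => [|p s IH]; first by rewrite big_nil.
by rewrite big_cons -IH pi_tensor_cons.
Qed.

Lemma tensor_span (x : tensor) :
  exists m (u : 'I_m -> N) (w : 'I_m -> M), x = \sum_l tmul (u l) (w l).
Proof.
pose s := repr x; have -> : x = \pi_tensor s by rewrite /s reprK.
exists (size s), (fun l => (nth (0, 0) s l).1), (fun l => (nth (0, 0) s l).2).
by rewrite pi_tensor_sum (big_nth (0, 0)) big_mkord.
Qed.

Lemma tmul_bilinear : is_bilinear tmul.
Proof.
split=> [m|n]; split=> [|x y|a x].
- by apply/tensor_eqP/Teqv_0l.
- by rewrite -(pi_tensor_cat [:: _]); apply/tensor_eqP/Teqv_addl.
- by rewrite tensor_scale_pi.
- by apply/tensor_eqP/Teqv_0r.
- by rewrite -(pi_tensor_cat [:: _]); apply/tensor_eqP/Teqv_addr.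
- by rewrite tensor_scale_pi; apply/tensor_eqP/Teqv_sym/Teqv_scale_swap.
Qed.

Section Lift.
Variables (P : lSemiModType A) (phi : N -> M -> P).
Hypothesis phi_bilinear : is_bilinear phi.

Definition eval_word (s : seq (N * M)) : P := \sum_(p <- s) phi p.1 p.2.

Lemma eval_word_scale a s : eval_word (scale_word a s) = a *: eval_word s.
Proof.
rewrite /eval_word big_map scaler_sumr; apply: eq_bigr => p _.
by case: phi_bilinear => phil _; rewrite (homZ _ _ (phil p.2)).
Qed.

Lemma eval_word_eqv s t : tensor_eqv s t -> eval_word s = eval_word t.
Proof.
have [phil phir] := phi_bilinear.
elim=> {s t} //.
- by move=> s t u _ -> _ ->.
- move=> s s' t t' _ e1 _ e2.
  by rewrite /eval_word !big_cat -/(eval_word s) e1 -/(eval_word t) e2.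
- by move=> a s t _ e; rewrite !eval_word_scale e.
- by move=> s t; rewrite /eval_word !big_cat; apply: addrC.
- move=> n n' m; rewrite /eval_word !big_cons !big_nil /=.
  by rewrite (homD _ _ (phil m)) !addr0.
- move=> n m m'; rewrite /eval_word !big_cons !big_nil /=.
  by rewrite (homD _ _ (phir n)) !addr0.
- by move=> m; rewrite /eval_word big_seq1 big_nil (hom0 (phil m)).
- by move=> n; rewrite /eval_word big_seq1 big_nil (hom0 (phir n)).
- move=> a n m; rewrite /eval_word !big_seq1.
  by rewrite (homZ _ _ (phil m)) (homZ _ _ (phir n)).
Qed.

Definition tensor_lift (x : tensor) : P := eval_word (repr x).

Lemma tensor_lift_pi s : tensor_lift (\pi_tensor s) = eval_word s.
Proof. by apply: eval_word_eqv; apply/tensor_eqP; rewrite reprK. Qed.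

End Lift.

Lemma tensor_universal : is_tensor tmul.
Proof.
split=> [|P phi phi_bilinear]; first exact: tmul_bilinear.
exists (tensor_lift phi); split.
- split=> [|x y|a x].
  + by rewrite -pi_tensor_nil tensor_lift_pi // /eval_word big_nil.
  + elim/quotW: x => s; elim/quotW: y => t.
    by rewrite -pi_tensor_cat !tensor_lift_pi // /eval_word big_cat.
  + elim/quotW: x => s.
    by rewrite tensor_scale_pi !tensor_lift_pi // eval_word_scale.
- by move=> n m; rewrite tensor_lift_pi // /eval_word big_seq1.
- move=> h hh htmul; elim/quotW=> s.
  by rewrite tensor_lift_pi // pi_tensor_sum hom_sum //; apply: eq_bigr => p _.
Qed.

End TensorProduct.

Arguments tmul {A N M}.

Section TensorWithFree.
Variable A : comPzSemiRingType.

Lemma tmul_homl (N M : lSemiModType A) (m : M) : is_hom ((@tmul _ N M)^~ m).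
Proof. by case: (tmul_bilinear N M). Qed.

Lemma tmul_homr (N M : lSemiModType A) (n : N) : is_hom (@tmul _ N M n).
Proof. by case: (tmul_bilinear N M). Qed.

Lemma tensor_map_ex (N1 N2 M : lSemiModType A) (f : N1 -> N2) :
  is_hom f -> exists h, tensor_map (@tmul _ N1 M) (@tmul _ N2 M) f h.
Proof.
move=> hf; have phi_bilinear : is_bilinear (fun x (m : M) => tmul (f x) m).
  by split=> [m|x]; [exact: hom_comp (tmul_homl _ m) | exact: tmul_homr].
by have [h [hh htmul _]] := (tensor_universal N1 M).2 _ _ phi_bilinear; exists h.
Qed.

Lemma tensor_rV_coord n (M : lSemiModType A) (i : 'I_n) :
  exists pi_i : tensor 'rV[A]_n M -> M,
    is_hom pi_i /\ forall v m, pi_i (tmul v m) = v 0 i *: m.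
Proof.
have coord_bilinear : is_bilinear (fun (v : 'rV[A]_n) (m : M) => v 0 i *: m).
  split=> [m|v]; split=> [|x y|a x]; rewrite ?mxE.
  - by rewrite scale0r.
  - by rewrite scalerDl.
  - by rewrite scalerA.
  - by rewrite scaler0.
  - by rewrite scalerDr.
  - by rewrite !scalerA mulrC.
have [pi_i [hpi pi_tmul _]] := (tensor_universal _ M).2 _ _ coord_bilinear.
by exists pi_i.
Qed.

Lemma tensor_map_dual k n (M : lSemiModType A) (q : 'rV[A]_n -> M) (B : 'M[A]_(k, n)) h :
  is_hom q -> tensor_map tmul tmul (mulmx^~ B^T : 'rV_n -> 'rV_k) h ->
  h (\sum_i tmul 'e_i (q 'e_i)) = \sum_j tmul 'e_j (q (row j B)).
Proof.
move=> hq [hh htmul]; rewrite hom_sum //.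
under eq_bigr => i _ do rewrite htmul (hom_lcombE (tmul_homl _ _)) /lcomb.
rewrite exchange_big; apply: eq_bigr => j _ /=.
rewrite (hom_lcombE hq) /lcomb (hom_sum _ _ (tmul_homr _ _)).
apply: eq_bigr => i _; rewrite (homZ _ _ (tmul_homr _ _)).
by rewrite -rowE !mxE.
Qed.

End TensorWithFree.

Section FlatFinitelyPresented.
Variables (A : comPzSemiRingType) (M : lSemiModType A) (k n : nat).
Variables (f g : 'rV[A]_k -> 'rV[A]_n) (q : 'rV[A]_n -> M).
Hypotheses (f_hom : is_hom f) (g_hom : is_hom g) (q_coeq : is_coequalizer f g q).

Let q_hom : is_hom q. Proof. by case: q_coeq. Qed.

Local Notation F := (hom_mx f).
Local Notation G := (hom_mx g).
Local Notation dual B := (mulmx^~ B^T : 'rV[A]_n -> 'rV[A]_k).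

Definition generators_tensor : tensor 'rV[A]_n M := \sum_i tmul 'e_i (q 'e_i).

Lemma dual_tensor_maps_agree fT gT :
  tensor_map tmul tmul (dual F) fT -> tensor_map tmul tmul (dual G) gT ->
  fT generators_tensor = gT generators_tensor.
Proof.
move=> hfT hgT; rewrite (tensor_map_dual q_hom hfT) (tensor_map_dual q_hom hgT).
apply: eq_bigr => j _; rewrite !rowK; congr tmul.
by case: q_coeq => _ [qfg _]; apply: qfg.
Qed.

Hypothesis M_flat : flat M.

Lemma generators_tensor_decomposition :
  exists m (c : 'I_m -> 'rV[A]_n) (x : 'I_m -> M),
    (forall l, c l *m F^T = c l *m G^T) /\
    generators_tensor = \sum_l tmul (c l) (x l).
Proof.
have E_eq := equalizer_subP (hom_mulmx F^T) (hom_mulmx G^T).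
have [eT heT] := tensor_map_ex M E_eq.1.
have [fT hfT] := tensor_map_ex M (hom_mulmx F^T).
have [gT hgT] := tensor_map_ex M (hom_mulmx G^T).
have ET_eq : is_equalizer fT gT eT.
  case: M_flat => [[_ _ flat_eq] _].
  by apply: (flat_eq _ _ _ _ _ _ _ _ _ _ _ _ _ _ _ E_eq _ _ _ hfT hgT heT);
    apply: tensor_universal.
have [y eTy] := equalizer_lift hfT.1 hgT.1 ET_eq (dual_tensor_maps_agree hfT hgT).
have [m [u [x yE]]] := tensor_span y.
exists m, (fun l => val (u l)), x; split; first by move=> l; apply/eqP/(valP (u l)).
by rewrite -eTy yE (hom_sum _ _ heT.1); apply: eq_bigr => l _; rewrite heT.2.
Qed.

Lemma coequalizer_factors_through_free :
  exists m (h : 'rV[A]_n -> 'rV[A]_m) (x : 'I_m -> M),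
    [/\ is_hom h, h \o f =1 h \o g & q =1 lcomb x \o h].
Proof.
have [m [c [x [cFG X_dec]]]] := generators_tensor_decomposition.
pose C := \matrix_l c l.
exists m, (mulmx^~ C^T), x; split; first exact: hom_mulmx.
  move=> v /=; rewrite (hom_mxE f_hom) (hom_mxE g_hom) -!mulmxA.
  congr (v *m _); apply: trmx_inj; rewrite !trmx_mul !trmxK.
  by apply/row_matrixP => l; rewrite !row_mul rowK cFG.
apply: hom_rV_ext => [||i]; first exact: q_hom.
  exact/hom_comp/hom_lcomb/hom_mulmx.
have [pi_i [pi_hom pi_tmul]] := tensor_rV_coord M i.
transitivity (pi_i generators_tensor).
  rewrite /generators_tensor (hom_sum _ _ pi_hom).
  rewrite -[q 'e_i](lcomb_delta (q \o delta_mx 0) i) /lcomb.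
  by apply: eq_bigr => i' _; rewrite pi_tmul !mxE eq_sym.
rewrite X_dec (hom_sum _ _ pi_hom) /= /lcomb -rowE.
by apply: eq_bigr => l _; rewrite pi_tmul !mxE.
Qed.

Lemma flat_finitely_presented_retract :
  exists m (s : M -> 'rV[A]_m) (r : 'rV[A]_m -> M),
    [/\ is_hom s, is_hom r & r \o s =1 id].
Proof.
have [m [h [x [h_hom hfg qE]]]] := coequalizer_factors_through_free.
have [_ [_ q_univ]] := q_coeq.
have [s [s_hom sq _]] := q_univ _ h h_hom hfg.
exists m, s, (lcomb x); split=> //; first exact: hom_lcomb.
apply: (coequalizer_epi q_coeq) => [||v]; first exact: hom_comp (hom_lcomb x).
  exact: hom_id.
by rewrite /= -[s (q v)]/((s \o q) v) sq qE.
Qed.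

End FlatFinitelyPresented.

Theorem mainTheorem6 (A : comPzSemiRingType) (M : lSemiModType A) :
  finitely_presented M -> flat M -> projective M.
Proof.
move=> [k [n [f [g [q [f_hom g_hom q_coeq]]]]]] M_flat.
have [m [s [r [s_hom r_hom rsK]]]] :=
  flat_finitely_presented_retract f_hom g_hom q_coeq M_flat.
exact: rV_retract_projective s_hom r_hom rsK.
Qed.
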